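(* For every integer $n\ge 1$, let $M_T(n)$ denote the maximum modulus of an independence root over all trees on $n$ vertices. Then $$M_T(n)\le \begin{cases} 2^{\frac{n-1}{2}}+\frac{n-1}{2} & \text{if } n \text{ is odd},\\ 2^{\frac{n-2}{2}}+\frac{n}{2} & \text{if } n \text{ is even}.\end{cases}$$
   Context: For a finite simple graph $G$, the independence polynomial is $i(G,x)=\sum_{k=0}^{\alpha(G)} i_k x^k$, where $i_k$ is the number of independent sets of size $k$ in $G$ (with $i_0=1$) and $\alpha(G)$ is the independence number. Its complex roots are the independence roots of $G$. *)

From HB Require Import structures.
From mathcomp Require Import all_boot all_order all_algebra.
Set Implicit Arguments. Unset Strict Implicit. Unset Printing Implicit Defensive.
Import Order.TTheory GRing.Theory Num.Theory.
Local Open Scope ring_scope.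

Definition simple_graph (T : finType) (e : rel T) : Prop :=
  symmetric e /\ irreflexive e.

Definition connected_graph (T : finType) (e : rel T) : Prop :=
  forall x y : T, connect e x y.

Definition acyclic_graph (T : finType) (e : rel T) : Prop :=
  forall c : seq T, ucycle e c -> (size c < 3)%N.

Definition is_tree (T : finType) (e : rel T) : Prop :=
  simple_graph e /\ connected_graph e /\ acyclic_graph e.

Definition independent (T : finType) (e : rel T) (S : {set T}) : bool :=
  [forall x in S, forall y in S, ~~ e x y].

Definition indep_count (T : finType) (e : rel T) (k : nat) : nat :=
  #|[set S : {set T} | independent e S && (#|S| == k)]|.

(* Independence polynomial i(G,x) = sum_k i_k x^k (coefficients over C);
   i_k = 0 for k > alpha(G), in particular for k > #|T|. *)
Definition indep_poly (C : nzRingType) (T : finType) (e : rel T) : {poly C} :=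
  \poly_(k < #|T|.+1) (indep_count e k)%:R.

Definition MT_bound (n : nat) : nat :=
  if odd n then (2 ^ ((n - 1) %/ 2) + (n - 1) %/ 2)%N
  else (2 ^ ((n - 2) %/ 2) + n %/ 2)%N.

(* Write [alpha] for the independence number of a graph, [m] for its number
   of maximal independent sets and [m_k] for the number of those of size [k].
   Adding one vertex to each non-maximal independent [k]-set gives
   [i_k <= (k+1) i_(k+1) + m_k], hence [i_k <= (alpha + m - 1) i_(k+1)] for
   [k < alpha].  By the Enestrom-Kakeya theorem, applied to [i(T, B x)], the
   roots of a polynomial with positive coefficients [a_k <= B a_(k+1)] have
   modulus at most [B], so it suffices to show [alpha + m <= B + 1] for trees,
   [B] being the bound of the corollary.  For a leaf [v] with neighbour [u],
   [m(F) <= m(F - u - v) + m(F - N[u])] and [alpha(F) <= alpha(F - u - v) + 1];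
   induction then gives [m <= 2^k] and [alpha + m <= 2^k + k + 1] for forests
   on at most [2k + 1] vertices, and [alpha + m <= 2^j + j + 2] for trees on
   [2j + 2] vertices. *)

From HB Require Import structures.
From mathcomp Require Import all_boot all_order all_algebra.
From mathcomp Require Import zify ring.
Set Implicit Arguments. Unset Strict Implicit. Unset Printing Implicit Defensive.
Import Order.TTheory GRing.Theory Num.Theory.

Section Independence.
Variables (T : finType) (e : rel T).
Hypotheses (e_sym : symmetric e) (e_irr : irreflexive e).

Definition induced (A : {set T}) : rel T := fun x y => [&& x \in A, y \in A & e x y].
Arguments induced : simpl never.
Definition nbhd (A : {set T}) x := [set y in A | e x y].
Definition pendant (A : {set T}) u v := (v \in A) && (nbhd A v == [set u]).

Definition indep_in (A S : {set T}) := (S \subset A) && independent e S.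
Definition maxindep_in (A S : {set T}) :=
  indep_in A S && [forall x in A :\: S, exists y in S, e x y].
Definition maxindep_count (A : {set T}) := #|[set S | maxindep_in A S]|.

Lemma indepP (S : {set T}) :
  reflect {in S &, forall x y, ~~ e x y} (independent e S).
Proof.
apply: (iffP forall_inP) => [indS x y xS yS | indS x xS].
  exact: forall_inP (indS x xS) y yS.
by apply/forall_inP => y; apply: indS.
Qed.

Lemma indep_subset (S S' : {set T}) :
  S' \subset S -> independent e S -> independent e S'.
Proof.
by move=> /subsetP sS'S /indepP indS; apply/indepP => x y /sS'S xS /sS'S; apply: indS.
Qed.

Lemma indepU1 (S : {set T}) x :
  independent e S -> {in S, forall y, ~~ e x y} -> independent e (x |: S).
Proof.
move=> /indepP indS xS; apply/indepP => a b; rewrite !inE.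
case/orP=> [/eqP-> | aS] /orP[/eqP-> | bS]; first by rewrite e_irr.
- exact: xS.
- by rewrite e_sym xS.
- exact: indS.
Qed.

Lemma maxindep_inP (A S : {set T}) :
  reflect [/\ S \subset A, independent e S &
             forall x, x \in A -> x \notin S -> exists2 y, y \in S & e x y]
          (maxindep_in A S).
Proof.
apply: (iffP andP) => [[/andP[sSA indS] /forall_inP domS] | [sSA indS domS]].
  split=> // x xA xS.
  by apply/exists_inP/domS; rewrite inE xS xA.
split; first exact/andP.
apply/forall_inP => x; rewrite inE => /andP[xS xA].
by have [y yS exy] := domS x xA xS; apply/exists_inP; exists y.
Qed.

Lemma maxindep_count_edgeless (A : {set T}) :
  {in A &, forall x y, ~~ e x y} -> maxindep_count A = 1.
Proof.
move=> noedge; rewrite /maxindep_count -(cards1 A).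
suff -> : [set S | maxindep_in A S] = [set A] by [].
apply/setP => S; rewrite !inE; apply/maxindep_inP/eqP => [[sSA _ domS] | ->].
  apply/eqP; rewrite eqEsubset sSA; apply/subsetP => x xA.
  apply: contraT => xS; have [y yS exy] := domS x xA xS.
  by rewrite (negbTE (noedge x y xA (subsetP sSA y yS))) in exy.
by split=> //; [apply/indepP | move=> x ->].
Qed.

Lemma pendantP A u v :
  pendant A u v -> [/\ u \in A, v \in A, v \in nbhd A u & u != v].
Proof.
case/andP=> vA /eqP nbhd_v.
have : u \in nbhd A v by rewrite nbhd_v set11.
rewrite inE => /andP[uA evu]; rewrite inE vA e_sym evu; split=> //.
by apply: contraTneq evu => ->; rewrite e_irr.
Qed.

Lemma nbhd_neq A u v : v \in nbhd A u -> v != u.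
Proof. by rewrite inE => /andP[_]; apply: contraTneq => ->; rewrite e_irr. Qed.

Lemma card_maxindep_notin A (L : {set T}) u : {in L, forall v, pendant A u v} ->
  #|[set S | maxindep_in A S & u \notin S]| <= maxindep_count (A :\: (u |: L)).
Proof.
move=> L_pendant.
have sLS S : maxindep_in A S -> u \notin S -> L \subset S.
  move=> /maxindep_inP[sSA _ domS] uS; apply/subsetP => v vL.
  have /andP[vA /eqP nbhd_v] := L_pendant v vL.
  apply: contraT => vS; have [y yS evy] := domS v vA vS.
  have : y \in nbhd A v by rewrite inE evy (subsetP sSA).
  by rewrite nbhd_v inE => /eqP yu; rewrite -yu yS in uS.
rewrite -(card_in_imset (f := fun S => S :\: L)); last first.
  move=> S1 S2; rewrite !inE => /andP[S1max uS1] /andP[S2max uS2] eqS.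
  rewrite -(setID S1 L) -(setID S2 L) eqS.
  by rewrite (setIidPr (sLS _ S1max uS1)) (setIidPr (sLS _ S2max uS2)).
apply/subset_leq_card/subsetP => _ /imsetP[S /[!inE] /andP[Smax uS] ->].
have /maxindep_inP[sSA indS domS] := Smax.
apply/maxindep_inP; split.
- apply/subsetP => x /[!inE] /andP[xL xS].
  rewrite negb_or xL (subsetP sSA) // !andbT.
  by apply: contraNneq uS => <-.
- exact: indep_subset (subsetDl _ _) indS.
- move=> x /[!inE] /andP[/norP[xu xL] xA] /nandP[/negbNE xL' | xS].
    by rewrite xL' in xL.
  have [y yS exy] := domS x xA xS; exists y => //; rewrite inE yS andbT.
  apply: contra xu => yL; have /andP[_ /eqP nbhd_y] := L_pendant y yL.
  by rewrite -in_set1 -nbhd_y inE xA e_sym.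
Qed.

Lemma card_maxindep_in A u :
  #|[set S | maxindep_in A S & u \in S]| <= maxindep_count (A :\: (u |: nbhd A u)).
Proof.
rewrite -(card_in_imset (f := fun S => S :\ u)); last first.
  move=> S1 S2 /[!inE] /andP[_ uS1] /andP[_ uS2] eqS.
  by rewrite -(setD1K uS1) -(setD1K uS2) eqS.
apply/subset_leq_card/subsetP => _ /imsetP[S /[!inE] /andP[Smax uS] ->].
have /maxindep_inP[sSA indS domS] := Smax.
apply/maxindep_inP; split.
- apply/subsetP => x /[!inE] /andP[xu xS]; rewrite negb_or xu (subsetP sSA) //=.
  by rewrite !andbT; apply: (indepP _ indS).
- exact: indep_subset (subsetDl _ _) indS.
- move=> x /[!inE] /andP[/norP[xu /nandP xnbhd] xA] /nandP[/negbNE/eqP xu' | xS].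
    by rewrite xu' eqxx in xu.
  have [y yS exy] := domS x xA xS; exists y => //; rewrite !inE yS andbT.
  apply: contraTneq exy => ->; rewrite e_sym.
  by case: xnbhd; rewrite ?xA.
Qed.

Lemma maxindep_count_split A (L : {set T}) u : {in L, forall v, pendant A u v} ->
  maxindep_count A <=
    maxindep_count (A :\: (u |: L)) + maxindep_count (A :\: (u |: nbhd A u)).
Proof.
move=> L_pendant; rewrite /maxindep_count -(cardsID [set S : {set T} | u \in S]) addnC.
apply: leq_add; [apply: leq_trans _ (card_maxindep_notin L_pendant) |
                 apply: leq_trans _ (card_maxindep_in A u)];
  by apply/subset_leq_card/subsetP => S; rewrite !inE andbC.
Qed.

Lemma card_indep_in (A S : {set T}) : indep_in A S -> #|S| <= #|A|.
Proof. by case/andP=> /subset_leq_card. Qed.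

Lemma indep_in_setD (A X S : {set T}) : indep_in A S -> indep_in (A :\: X) (S :\: X).
Proof.
case/andP=> sSA indS; rewrite /indep_in setSD //=.
exact: indep_subset (subsetDl _ _) indS.
Qed.

Lemma card_setD_star (A L : {set T}) u : u \in A -> L \subset nbhd A u ->
  (#|A :\: (u |: L)| + #|L|).+1 = #|A|.
Proof.
move=> uA sLnbhd; have sLA : L \subset A.
  by apply: subset_trans sLnbhd _; apply/subsetP => x; rewrite inE => /andP[].
have uL : u \notin L by apply/negP => /(subsetP sLnbhd)/nbhd_neq; rewrite eqxx.
have sUA : u |: L \subset A by rewrite subUset sub1set uA.
have := subset_leq_card sUA; rewrite cardsD (setIidPr sUA) cardsU1 uL; lia.
Qed.

Lemma card_indep_setD_star (A L S : {set T}) u :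
  L \subset nbhd A u -> 0 < #|L| -> independent e S ->
  #|S| <= #|S :\: (u |: L)| + #|L|.
Proof.
move=> sLnbhd L_gt0 indS; rewrite -(cardsID (u |: L) S) addnC leq_add2l.
have [uS | uS] := boolP (u \in S); last first.
  apply/subset_leq_card/subsetP => x /[!inE] /andP[xS /orP[/eqP xu | //]].
  by rewrite -xu xS in uS.
suff -> : S :&: (u |: L) = [set u] by rewrite cards1.
apply/setP => x; rewrite !inE; have [-> | xu] := eqVneq x u; first by rewrite uS.
apply/negP => /andP[xS xL]; move/(subsetP sLnbhd): xL; rewrite inE => /andP[_].
exact/negP/(indepP _ indS).
Qed.

Lemma indep_maxindep_split (A L S : {set T}) u :
  {in L, forall v, pendant A u v} -> 0 < #|L| -> independent e S ->
  #|S| + maxindep_count A <=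
    (#|S :\: (u |: L)| + maxindep_count (A :\: (u |: L))) +
    (#|L| + maxindep_count (A :\: (u |: nbhd A u))).
Proof.
move=> L_pendant L_gt0 indS.
have sLnbhd : L \subset nbhd A u.
  by apply/subsetP => v /L_pendant /pendantP[].
have := card_indep_setD_star sLnbhd L_gt0 indS.
have := maxindep_count_split L_pendant; lia.
Qed.

Lemma indep_maxindep_split_pendant (A S : {set T}) u v :
  pendant A u v -> indep_in A S ->
  #|S| + maxindep_count A <=
    (#|S :\: (u |: [set v])| + maxindep_count (A :\: (u |: [set v]))) +
    (1 + maxindep_count (A :\: (u |: nbhd A u))).
Proof.
move=> pend_v /andP[_ indS]; rewrite -(cards1 v).
by apply: indep_maxindep_split indS => [y /set1P-> | ]; rewrite ?cards1.
Qed.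

(* Each non-maximal independent [j]-set is [J :\ x] for some independent
   [j.+1]-set [J] and some [x \in J]. *)
Lemma card_nonmaximal_indep j :
  #|[set S | [&& independent e S, #|S| == j & ~~ maxindep_in setT S]]|
    <= j.+1 * indep_count e j.+1.
Proof.
set I := [set S | independent e S && (#|S| == j.+1)].
pose P := [set p : {set T} * T | (p.1 \in I) && (p.2 \in p.1)].
have card_P : #|P| = j.+1 * indep_count e j.+1.
  transitivity (\sum_(J in I) #|J|).
    rewrite -sum1_card; under [RHS]eq_bigr => J _ do rewrite -sum1_card.
    by rewrite pair_big_dep; apply: eq_bigl => -[J x]; rewrite inE.
  rewrite (eq_bigr (fun _ => j.+1)) => [|J]; last by rewrite inE => /andP[_ /eqP].
  by rewrite sum_nat_const mulnC.
rewrite -card_P; apply: leq_trans (leq_imset_card (fun p => p.1 :\ p.2) P).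
apply/subset_leq_card/subsetP => S /[!inE] /and3P[indS /eqP cardS Snmax].
have : [exists x in ~: S, [forall y in S, ~~ e x y]].
  apply: contraR Snmax => /exists_inPn noext.
  apply/maxindep_inP; split=> // x _ xS.
  have /exists_inP[y yS /negPn exy] : [exists y in S, ~~ ~~ e x y].
    by rewrite -negb_forall_in noext ?inE.
  by exists y.
case/exists_inP => x /[!inE] xS /forall_inP xfree.
apply/imsetP; exists (x |: S, x); last by rewrite /= setU1K.
by rewrite !inE /= eqxx andbT indepU1 //= cardsU1 xS cardS.
Qed.

Lemma indep_count_le j :
  indep_count e j <=
    j.+1 * indep_count e j.+1 + #|[set S | maxindep_in setT S & #|S| == j]|.
Proof.
rewrite /indep_count -(cardsID [set S : {set T} | maxindep_in setT S]) addnC.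
apply: leq_add; first apply: leq_trans _ (card_nonmaximal_indep j).
  by apply/subset_leq_card/subsetP => S; rewrite !inE => /andP[-> /andP[-> ->]].
by apply/subset_leq_card/subsetP => S; rewrite !inE => /andP[/andP[_ ->] ->].
Qed.


Lemma exists_max_indep :
  exists2 D : {set T}, independent e D & forall S, independent e S -> #|S| <= #|D|.
Proof.
have indep0 : independent e set0 by apply/indepP => x; rewrite inE.
by case: (arg_maxnP (fun S : {set T} => #|S|) indep0) => D; exists D.
Qed.

Lemma max_indep_maximal (D : {set T}) : independent e D ->
  (forall S, independent e S -> #|S| <= #|D|) -> maxindep_in setT D.
Proof.
move=> indD maxD; apply/maxindep_inP; split=> // x _ xD.
have [/exists_inP[y yD exy] | /exists_inPn xfree] := boolP [exists y in D, e x y].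
  by exists y.
by have := maxD _ (indepU1 indD xfree); rewrite cardsU1 xD ltnn.
Qed.

Lemma indep_count_eq0 d j :
  (forall S, independent e S -> #|S| <= d) -> d < j -> indep_count e j = 0.
Proof.
move=> maxd dj; apply/eqP; rewrite cards_eq0; apply/eqP/setP => S; rewrite !inE.
apply/negP => /andP[/maxd cardS /eqP jS]; lia.
Qed.

Lemma indep_count_gt0 (D : {set T}) j : independent e D -> j <= #|D| -> 0 < indep_count e j.
Proof.
move=> indD jD; have : 0 < 'C(#|D|, j) by rewrite bin_gt0.
rewrite -cards_draws => /leq_trans; apply.
apply/subset_leq_card/subsetP => S; rewrite !inE => /andP[sSD ->].
by rewrite (indep_subset sSD indD).
Qed.

Lemma indep_count_ratio (D : {set T}) j :
  independent e D -> (forall S, independent e S -> #|S| <= #|D|) -> j < #|D| ->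
  indep_count e j <= (#|D| + maxindep_count setT).-1 * indep_count e j.+1.
Proof.
move=> indD maxD jD; apply: leq_trans (indep_count_le j) _.
have : #|[set S | maxindep_in setT S & #|S| == j]| < maxindep_count setT.
  apply/proper_card/properP; split.
    by apply/subsetP => S; rewrite !inE => /andP[].
  by exists D; rewrite !inE ?max_indep_maximal // negb_and neq_ltn jD orbT.
have := indep_count_gt0 indD jD; nia.
Qed.

End Independence.

Section Forest.
Variables (T : finType) (e : rel T).
Hypotheses (e_sym : symmetric e) (e_irr : irreflexive e) (e_acyclic : acyclic_graph e).

Lemma uniq_path_adj_head x p y :
  path e x p -> uniq (x :: p) -> y \in p -> e y x -> y = head x p.
Proof.
move=> e_xp uniq_xp yp eyx; apply/eqP; apply: contraT => y_head.
have yi : (index y p).+1 <= size p by rewrite index_mem.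
pose r := take (index y p).+1 p.
have last_r : last x r = y.
  by rewrite /r (last_nth x) size_takel //= nth_take // nth_index.
have : size (x :: r) < 3.
  apply: e_acyclic; rewrite /ucycle /= rcons_path take_path //= last_r eyx /=.
  have : subseq (x :: r) (x :: p) by rewrite /= eqxx; apply: take_subseq.
  by move/subseq_uniq/(_ uniq_xp).
rewrite /= /r size_takel // !ltnS leqn0 => /eqP index_y0.
by move: y_head; rewrite -nth0 -index_y0 nth_index ?eqxx.
Qed.

Definition spath (A : {set T}) x p := [&& x \in A, path (induced e A) x p & uniq (x :: p)].

Definition longest_spath (A : {set T}) x p :=
  spath A x p /\ forall y q, spath A y q -> size q <= size p.

Lemma spath_path A x p : spath A x p -> path e x p.
Proof. by case/and3P=> _ + _; apply: sub_path => a b /and3P[]. Qed.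

Lemma exists_longest_spath A x p : spath A x p ->
  exists y q, longest_spath A y q /\ size p <= size q.
Proof.
move=> sp_xp.
pose has_spath n := [exists y, exists q : n.-tuple T, spath A y q].
have ex_n : exists n, has_spath n.
  by exists (size p); apply/existsP; exists x; apply/existsP; exists (in_tuple p).
have ub_n n : has_spath n -> n <= #|T|.
  case/existsP=> y /existsP[q /and3P[_ _ uniq_yq]].
  have := card_uniqP uniq_yq; rewrite /= size_tuple => card_yq.
  by apply: ltnW; rewrite -card_yq max_card.
case: (ex_maxnP ex_n ub_n) => n /existsP[y /existsP[q sp_yq]] max_n.
exists y, q; split; [split=> // z r sp_zr | ]; rewrite size_tuple max_n //.
  by apply/existsP; exists z; apply/existsP; exists (in_tuple r).
by apply/existsP; exists x; apply/existsP; exists (in_tuple p).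
Qed.

Lemma longest_spath_pendant A x u q : longest_spath A x (u :: q) -> pendant e A u x.
Proof.
case=> sp_xuq max_sp; have /and3P[xA /andP[ind_xu _] uniq_xuq] := sp_xuq.
rewrite /pendant xA; apply/eqP/setP => y; rewrite !inE.
apply/andP/eqP => [[yA exy] | ->]; last by case/and3P: ind_xu.
have [/predU1P[yx | yuq] | y_notin] := boolP (y \in x :: u :: q).
- by rewrite yx e_irr in exy.
- by apply: uniq_path_adj_head (spath_path sp_xuq) uniq_xuq yuq _; rewrite e_sym.
- have : spath A y (x :: u :: q).
    move: sp_xuq; rewrite /spath /= /induced yA xA (e_sym y) exy y_notin.
    by case/and3P=> _ /andP[-> ->] /andP[-> ->].
  by move/max_sp; rewrite ltnn.
Qed.

(* The first vertex of a longest path is a leaf, and so is every neighbour of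
   the second vertex other than the third one. *)
Lemma exists_pendant_twig A a b : induced e A a b ->
  exists u v w, pendant e A u v /\ {in nbhd e A u, forall y, y != w -> pendant e A u y}.
Proof.
move=> ind_ab; have sp_ab : spath A a [:: b].
  case/and3P: (ind_ab) => aA _ eab; rewrite /spath aA /= ind_ab inE andbT.
  by rewrite andbT; apply: contraTneq eab => ->; rewrite e_irr.
have [x [[|u q] [long_xq /= size_q]]] := exists_longest_spath sp_ab => //.
have [sp_xuq max_sp] := long_xq.
exists u, x, (head u q); split=> [|y]; first exact: longest_spath_pendant long_xq.
move=> y_nbhd y_head; have [-> // | yx] := eqVneq y x.
  exact: longest_spath_pendant long_xq.
have /andP[yA euy] : (y \in A) && e u y by rewrite inE in y_nbhd.
have /and3P[_ /= /andP[/and3P[_ uA _] path_uq] /andP[_ uniq_uq]] := sp_xuq.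
apply: (longest_spath_pendant (q := q)); split=> [|z r /max_sp //].
have sp_uq : spath A u q by rewrite /spath uA path_uq.
have y_notin : y \notin u :: q.
  rewrite inE negb_or (nbhd_neq e_irr y_nbhd) /=.
  apply: contra y_head => yq; apply/eqP.
  by apply: uniq_path_adj_head (spath_path sp_uq) uniq_uq yq _; rewrite e_sym.
by rewrite /spath /= y_notin path_uq uniq_uq /induced yA uA (e_sym y) euy.
Qed.

Definition connected_in (A : {set T}) := {in A &, forall x y, connect (induced e A) x y}.

Lemma connected_in_edge A : connected_in A -> 1 < #|A| -> exists a b, induced e A a b.
Proof.
move=> conA /card_gt1P[x [y [xA yA xy]]].
have /connectP[[|a p] /= ind_xp y_last] := conA x y xA yA; first by rewrite y_last eqxx in xy.
by case/andP: ind_xp => ind_xa _; exists x, a.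
Qed.

Lemma connected_in_closed A (B : {set T}) x :
  connected_in A -> x \in A -> x \in B -> {in B, forall y, nbhd e A y \subset B} ->
  A \subset B.
Proof.
move=> conA xA xB closedB; apply/subsetP => y yA.
have /connectP[p ind_xp ->] := conA x y xA yA.
elim: p x xA xB ind_xp => [//| z p IHp] x xA xB /= /andP[/and3P[_ zA exz] ind_zp].
by apply: IHp ind_zp => //; apply: (subsetP (closedB x xB)); rewrite inE zA exz.
Qed.

Lemma connected_in_setD1 A u v :
  connected_in A -> nbhd e A v \subset [set u] -> connected_in (A :\ v).
Proof.
move=> conA nbhd_v x y /[!inE] /andP[xv xA] /andP[yv yA].
have /connectP[p0 ind_xp0 y_last0] := conA x y xA yA.
case: (shortenP ind_xp0) y_last0 => p ind_xp uniq_xp _ y_last.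
apply/connectP; exists p => //; apply: (@sub_in_path _ [pred z | z != v]) (ind_xp).
  by move=> a b /[!inE] av bv /and3P[aA bA eab]; rewrite /induced !inE av bv aA bA eab.
apply/allP => z z_xp; apply: contraTneq z_xp => ->.
apply/negP => v_xp; rewrite inE eq_sym (negbTE xv) /= in v_xp.
case/splitPr: v_xp y_last ind_xp uniq_xp => p1 p2.
case: p2 => [|b p2]; first by rewrite last_cat /= => vy; rewrite vy eqxx in yv.
rewrite cat_path /= => _ /and4P[_ ind_av ind_vb _].
have nbhd_u t : induced e A v t -> t = u.
  by case/and3P=> _ tA evt; apply/set1P/(subsetP nbhd_v); rewrite inE tA evt.
have a_u : last x p1 = u by apply: nbhd_u; rewrite /induced andbCA e_sym.
have b_u := nbhd_u _ ind_vb.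
move=> uniq_xp; have : uniq ((x :: p1) ++ [:: v, b & p2]) by [].
rewrite cat_uniq => /and3P[_ /hasPn/(_ b) b_notin _].
by move: b_notin; rewrite b_u -a_u mem_last !inE eqxx orbT => /(_ isT).
Qed.

Lemma edgeless_or_pendant (A : {set T}) :
  {in A &, forall x y, ~~ e x y} \/ exists u v, pendant e A u v.
Proof.
have [/exists_inP[a aA /exists_inP[b bA eab]] | noedge] :=
  boolP [exists x in A, exists y in A, e x y]; last first.
  left=> x y xA yA; apply: contraNN noedge => exy.
  by apply/exists_inP; exists x => //; apply/exists_inP; exists y.
have ind_ab : induced e A a b by rewrite /induced aA bA eab.
by have [u [v [w [pend_v _]]]] := exists_pendant_twig ind_ab; right; exists u, v.
Qed.

Lemma card_pendant_split (A : {set T}) u v : pendant e A u v ->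
  (#|A :\: (u |: [set v])|).+2 = #|A| /\ (#|A :\: (u |: nbhd e A u)|).+2 <= #|A|.
Proof.
case/(pendantP e_sym e_irr) => uA _ v_nbhd _.
have := card_setD_star e_irr uA (subxx (nbhd e A u)).
have := card_setD_star e_irr uA (_ : [set v] \subset nbhd e A u); rewrite sub1set cards1.
have : 0 < #|nbhd e A u| by apply/card_gt0P; exists v.
lia.
Qed.

Lemma maxindep_count_forest_le k (A : {set T}) :
  #|A| <= k.*2.+1 -> maxindep_count e A <= 2 ^ k.
Proof.
elim: k A => [|k IHk] A cardA;
  have [noedge | [u [v pend_v]]] := edgeless_or_pendant A;
  try by rewrite maxindep_count_edgeless ?expn_gt0.
  by have [card1 _] := card_pendant_split pend_v; lia.
have [card1 card2] := card_pendant_split pend_v.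
have split_v : maxindep_count e A <=
    maxindep_count e (A :\: (u |: [set v])) + maxindep_count e (A :\: (u |: nbhd e A u)).
  by apply: (maxindep_count_split e_sym) => y /set1P->.
apply: leq_trans split_v _; rewrite expnS mul2n -addnn leq_add // IHk //; lia.
Qed.

Lemma indep_maxindep_forest_le k (A S : {set T}) :
  #|A| <= k.*2.+1 -> indep_in e A S -> #|S| + maxindep_count e A <= 2 ^ k + k + 1.
Proof.
elim: k A S => [|k IHk] A S cardA indS.
  have [noedge | [u [v pend_v]]] := edgeless_or_pendant A.
    by rewrite maxindep_count_edgeless //; have := card_indep_in indS; lia.
  by have [card1 _] := card_pendant_split pend_v; lia.
have [noedge | [u [v pend_v]]] := edgeless_or_pendant A.
  rewrite maxindep_count_edgeless //; have := card_indep_in indS.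
  have := ltn_expl k.+1 (ltnSn 1); lia.
have [card1 card2] := card_pendant_split pend_v.
have := indep_maxindep_split_pendant e_sym e_irr pend_v indS.
have := IHk (A :\: (u |: [set v])) _ (_ : _ <= k.*2.+1) (indep_in_setD _ indS).
have := @maxindep_count_forest_le k (A :\: (u |: nbhd e A u)).
rewrite expnS; lia.
Qed.

Lemma indep_maxindep_two_pendants_le j (A S : {set T}) u v v' :
  pendant e A u v -> pendant e A u v' -> v != v' ->
  #|A| = (j.+1).*2 -> indep_in e A S -> #|S| + maxindep_count e A <= 2 ^ j + j + 2.
Proof.
move=> pend_v pend_v' vv' cardA indS; set L := [set v; v'].
have L_pendant : {in L, forall y, pendant e A u y} by move=> y /set2P[]->.
have [uA _ v_nbhd _] := pendantP e_sym e_irr pend_v.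
have [_ _ v'_nbhd _] := pendantP e_sym e_irr pend_v'.
have sLnbhd : L \subset nbhd e A u by rewrite subUset !sub1set v_nbhd v'_nbhd.
have card1 := card_setD_star e_irr uA sLnbhd.
have card2 := card_setD_star e_irr uA (subxx (nbhd e A u)).
have card_L : #|L| = 2 by rewrite cards2 vv'.
have := subset_leq_card sLnbhd; rewrite card_L in card1 *.
case: j cardA => [|j] cardA; first by lia.
have /andP[_ indepS] := indS.
have := indep_maxindep_split e_sym e_irr L_pendant (_ : 0 < #|L|) indepS.
have := indep_maxindep_forest_le (_ : _ <= j.*2.+1) (indep_in_setD (u |: L) indS).
have := @maxindep_count_forest_le j (A :\: (u |: nbhd e A u)).
rewrite card_L expnS; lia.
Qed.

Lemma connected_in_subset_edge (A : {set T}) u v : connected_in A ->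
  pendant e A u v -> nbhd e A u \subset [set v] -> A \subset [set u; v].
Proof.
move=> conA pend_v nbhd_u; have [uA _ _ _] := pendantP e_sym e_irr pend_v.
apply: connected_in_closed conA uA (set21 u v) _ => y /set2P[-> | ->].
  by apply: subset_trans nbhd_u _; rewrite sub1set set22.
by case/andP: pend_v => _ /eqP->; rewrite sub1set set21.
Qed.

Lemma connected_in_setD_pendant (A : {set T}) u v w : connected_in A ->
  pendant e A u v -> nbhd e A u \subset [set v; w] ->
  connected_in (A :\: (u |: [set v])).
Proof.
move=> conA /andP[_ /eqP nbhd_v] nbhd_u.
rewrite setUC -setDDl; apply: (connected_in_setD1 (u := w)) (connected_in_setD1 conA _) _.
  by rewrite nbhd_v.
apply/subsetP => z /[!inE] /andP[/andP[zv zA] euz].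
have /(subsetP nbhd_u) : z \in nbhd e A u by rewrite inE zA euz.
by rewrite !inE (negbTE zv).
Qed.

Lemma indep_maxindep_pendant_twig_le j (A S : {set T}) u v w :
  (forall A' S', connected_in A' -> #|A'| = (j.+1).*2 -> indep_in e A' S' ->
     #|S'| + maxindep_count e A' <= 2 ^ j + j + 2) ->
  connected_in A -> pendant e A u v -> nbhd e A u = [set v; w] -> w != v ->
  #|A| = (j.+2).*2 -> indep_in e A S -> #|S| + maxindep_count e A <= 2 ^ j.+1 + j.+1 + 2.
Proof.
move=> IHj conA pend_v nbhd_u wv cardA indS.
have [uA _ _ _] := pendantP e_sym e_irr pend_v.
have [card1 _] := card_pendant_split pend_v.
have := card_setD_star e_irr uA (subxx (nbhd e A u)); rewrite nbhd_u cards2 eq_sym wv.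
have conA1 : connected_in (A :\: (u |: [set v])).
  by apply: connected_in_setD_pendant conA pend_v _; rewrite nbhd_u.
have := IHj _ _ conA1 (_ : _ = (j.+1).*2) (indep_in_setD (u |: [set v]) indS).
have := indep_maxindep_split_pendant e_sym e_irr pend_v indS; rewrite nbhd_u.
have := @maxindep_count_forest_le j (A :\: (u |: [set v; w])).
rewrite expnS; lia.
Qed.

(* For a leaf [v] at [u] given by [exists_pendant_twig], either [u] has a
   second leaf, or [nbhd u = {v, w}] and removing [u] and [v] leaves a
   connected tree on [2j] vertices ([nbhd u = {v}] would make [A = {u, v}]). *)
Lemma indep_maxindep_even_tree_le j (A S : {set T}) :
  connected_in A -> #|A| = (j.+1).*2 -> indep_in e A S ->
  #|S| + maxindep_count e A <= 2 ^ j + j + 2.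
Proof.
elim: j A S => [|j IHj] A S conA cardA indS.
all: have [a [b /exists_pendant_twig[u [v [w [pend_v twig]]]]]] :
       exists a b, induced e A a b by apply: connected_in_edge; rewrite ?cardA.
  have [card1 card2] := card_pendant_split pend_v.
  have := indep_maxindep_split_pendant e_sym e_irr pend_v indS.
  have := card_indep_in (indep_in_setD (u |: [set v]) indS).
  have := @maxindep_count_forest_le 0 (A :\: (u |: [set v])).
  have := @maxindep_count_forest_le 0 (A :\: (u |: nbhd e A u)).
  lia.
have [/existsP[v' /andP[v'v pend_v']] | no_pend] :=
  boolP [exists v', (v' != v) && pendant e A u v'].
  by apply: indep_maxindep_two_pendants_le pend_v pend_v' _ cardA indS; rewrite eq_sym.
have nbhd_u : nbhd e A u \subset [set v; w].
  apply/subsetP => y y_nbhd; rewrite !inE; have [-> | yw] := eqVneq y w; first by rewrite orbT.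
  rewrite orbF; apply: contraR no_pend => yv; apply/existsP; exists y.
  by rewrite yv twig.
have [uA _ v_nbhd uv] := pendantP e_sym e_irr pend_v.
have /andP[w_nbhd wv] : (w \in nbhd e A u) && (w != v).
  apply: contraT => w_bad; have : A \subset [set u; v].
    apply: connected_in_subset_edge conA pend_v _; apply/subsetP => y y_nbhd.
    move/(subsetP nbhd_u): (y_nbhd); rewrite !inE => /orP[// | /eqP yw].
    by move: w_bad; rewrite -yw y_nbhd negbK.
  by move/subset_leq_card; rewrite cards2 uv cardA.
apply: indep_maxindep_pendant_twig_le IHj conA pend_v _ wv cardA indS.
by apply/eqP; rewrite eqEsubset nbhd_u subUset !sub1set v_nbhd w_nbhd.
Qed.

Lemma tree_indep_maxindep_le n (S : {set T}) :
  connected_graph e -> #|T| = n -> 0 < n -> independent e S ->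
  #|S| + maxindep_count e setT <= MT_bound n + 1.
Proof.
move=> con_e cardT n_gt0 indepS; have indS : indep_in e setT S by rewrite /indep_in subsetT.
have := odd_double_half n; rewrite /MT_bound; case: ifP => odd_n n_eq.
  have := indep_maxindep_forest_le (k := (n - 1) %/ 2) (_ : #|setT| <= _) indS.
  by rewrite cardsT cardT; lia.
have conT : connected_in setT.
  move=> x y _ _; rewrite (@eq_connect _ _ e) ?con_e // => a b.
  by rewrite /induced !inE.
have := indep_maxindep_even_tree_le (j := (n - 2) %/ 2) conT (_ : _ = _) indS.
rewrite cardsT cardT; lia.
Qed.

End Forest.

Local Open Scope ring_scope.

Lemma mul_1subr_sum (R : comRingType) (f : nat -> R) (d : nat) (y : R) :
  (1 - y) * \sum_(j < d.+1) f j.+1 * y ^+ j =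
  \sum_(j < d.+1) (f j.+1 - f j) * y ^+ j + f 0 - f d.+1 * y ^+ d.+1.
Proof.
elim: d => [|d IHd]; first by rewrite !big_ord1 expr1; ring.
rewrite big_ord_recr mulrDr IHd [in RHS]big_ord_recr /=.
by move: (\sum_(i < d.+1) _) => s; rewrite !exprS; ring.
Qed.

(* Multiplying by [1 - y] turns the coefficients into the nonnegative
   increments [b j - b j.-1], which sum to [b d]; comparing with the leading
   term [b d * y ^+ d.+1] forces [|y| <= 1]. *)
Lemma enestrom_kakeya_sum (R : numDomainType) (b : nat -> R) (d : nat) (y : R) :
  0 <= b 0 -> (forall j, (j < d)%N -> b j <= b j.+1) -> b d != 0 ->
  \sum_(j < d.+1) b j * y ^+ j = 0 -> `|y| <= 1.
Proof.
move=> b0_ge0 b_mono bd_neq0 sum_eq0.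
pose f j := if j is j'.+1 then b j' else 0.
have df_ge0 j : (j <= d)%N -> 0 <= f j.+1 - f j.
  by case: j => [|j] /= jd; rewrite subr_ge0 // b_mono.
have sum_df : \sum_(j < d.+1) (f j.+1 - f j) = b d.
  by rewrite -(big_mkord xpredT (fun j => f j.+1 - f j)) telescope_sumr // subr0.
have bd_gt0 : 0 < b d.
  by rewrite lt_def bd_neq0 -sum_df sumr_ge0 // => j _; exact: df_ge0 (ltn_ord j).
rewrite real_leNgt ?normr_real ?real1 //; apply/negP => y_gt1.
have := mul_1subr_sum f d y; rewrite sum_eq0 mulr0 /= addr0 => /eqP.
rewrite eq_sym subr_eq0 => /eqP eq_lead.
have : `|b d * y ^+ d.+1| <= b d * `|y| ^+ d.
  rewrite -eq_lead (le_trans (ler_norm_sum _ _ _)) //.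
  rewrite -sum_df mulr_suml ler_sum // => j _.
  have dfj_ge0 := df_ge0 j (ltn_ord j).
  rewrite normrM normrX (ger0_norm dfj_ge0) ler_wpM2l //.
  by rewrite ler_weXn2l ?ltW // -ltnS.
rewrite normrM normrX gtr0_norm // exprS mulrCA ger_pMl; last first.
  by rewrite mulr_gt0 // exprn_gt0 // (lt_trans ltr01).
by move/(lt_le_trans y_gt1); rewrite ltxx.
Qed.

Lemma root_norm_le_coef_ratio (R : numFieldType) (p : {poly R}) (d : nat) (B z : R) :
  0 < B -> size p = d.+1 -> 0 <= p`_0 ->
  (forall j, (j < d)%N -> p`_j <= B * p`_j.+1) -> root p z -> `|z| <= B.
Proof.
move=> B_gt0 size_p p0_ge0 ratio /rootP pz_eq0.
have B_neq0 : B != 0 by rewrite gt_eqF.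
suff : `|z / B| <= 1 by rewrite normrM normfV (gtr0_norm B_gt0) ler_pdivrMr // mul1r.
apply: (@enestrom_kakeya_sum _ (fun j => p`_j * B ^+ j) d).
- by rewrite mulr1.
- move=> j jd; rewrite exprS mulrA ler_wpM2r ?exprn_ge0 ?(ltW B_gt0) //.
  by rewrite mulrC ratio.
- rewrite mulf_neq0 ?expf_neq0 //.
  by rewrite -[d]/(d.+1.-1) -size_p -lead_coefE lead_coef_eq0 -size_poly_eq0 size_p.
- rewrite -[RHS]pz_eq0 horner_coef size_p; apply: eq_bigr => j _.
  by rewrite exprMn exprVn mulrACA mulfV ?expf_neq0 ?mulr1.
Qed.

Lemma coef_indep_poly (R : nzRingType) (T : finType) (e : rel T) j :
  (indep_poly R e)`_j = (indep_count e j)%:R.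
Proof.
rewrite coef_poly; case: ltnP => // Tj.
by rewrite (@indep_count_eq0 _ _ #|T|) // => S _; apply: max_card.
Qed.

Lemma size_indep_poly (R : numDomainType) (T : finType) (e : rel T) (D : {set T}) :
  independent e D -> (forall S, independent e S -> #|S| <= #|D|)%N ->
  size (indep_poly R e) = #|D|.+1.
Proof.
move=> indD maxD; apply/eqP; rewrite eqn_leq; apply/andP; split.
  by apply/leq_sizeP => j Dj; rewrite coef_indep_poly (indep_count_eq0 maxD).
have : (indep_poly R e)`_#|D| != 0.
  by rewrite coef_indep_poly pnatr_eq0 -lt0n (indep_count_gt0 indD).
by apply: contraNT; rewrite -leqNgt => /leq_sizeP->.
Qed.

Theorem corollary2 (C : numClosedFieldType) (n : nat) (hn : (1 <= n)%N)
  (T : finType) (e : rel T) (hT : #|T| = n) (htree : is_tree e) (z : C) :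
  root (indep_poly C e) z -> `|z| <= (MT_bound n)%:R.
Proof.
case: htree => -[e_sym e_irr] [e_con e_acyclic].
have [D indD maxD] := exists_max_indep e.
have tree_bound := tree_indep_maxindep_le e_sym e_irr e_acyclic e_con hT hn indD.
apply: (root_norm_le_coef_ratio (d := #|D|)).
- by rewrite ltr0n /MT_bound; case: ifP; rewrite addn_gt0 expn_gt0.
- exact: size_indep_poly indD maxD.
- by rewrite coef_indep_poly ler0n.
move=> j jD; rewrite !coef_indep_poly -natrM ler_nat.
apply: leq_trans (indep_count_ratio e_sym e_irr indD maxD jD) _.
by rewrite leq_mul2r; apply/orP; right; lia.
Qed.
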